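(* For the hypergeometric weights described in the context, the functions $q_n:=\log H_n$ and $f_n:=S^{[1]}_n=p^1_{n+1}$ satisfy, for $n\ge1$, \[ \vartheta q_n=f_{n-1}-f_n,\qquad \vartheta^2 f_n-(2f_n-f_{n+1}-f_{n-1})\vartheta f_n=\mathrm e^{q_{n+1}-q_{n-1}}-\mathrm e^{q_{n+2}-q_n}. \]
   Context: Weights on $\mathbb N_0$: $w^{(a)}(k)=\frac{(b^{(a)}_1)_k\cdots(b^{(a)}_{M^{(a)}})_k}{(c_1)_k\cdots(c_N)_k}\frac{(\eta^{(a)})^k}{k!}$, $a\in\{1,2\}$, with convergent series. Moment matrix (indices from 0): $\mathscr M_{n,2m}=\sum_k k^{n+m}w^{(1)}(k)$, $\mathscr M_{n,2m+1}=\sum_k k^{n+m}w^{(2)}(k)$, with all leading principal minors nonzero, so $\mathscr M=S^{-1}H\tilde S^{-\top}$, $S,\tilde S$ lower unitriangular, $H=\operatorname{diag}(H_0,H_1,\dots)$, all depending on $(\eta^{(1)},\eta^{(2)})$. Write $S=I+\Lambda^\top S^{[1]}+(\Lambda^\top)^2S^{[2]}+\cdots$ with $\Lambda$ the matrix with ones on the first superdiagonal and $S^{[1]}=\operatorname{diag}(S^{[1]}_0,S^{[1]}_1,\dots)$. $B_n(x)=x^n+p^1_nx^{n-1}+\cdots$ is the $n$-th entry of $SX(x)$, $X(x)=(1,x,x^2,\dots)^\top$. $\vartheta=\eta^{(1)}\partial/\partial\eta^{(1)}+\eta^{(2)}\partial/\partial\eta^{(2)}$. *)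

From Stdlib Require Import Reals Arith.
From Coquelicot Require Import Coquelicot.
Open Scope R_scope.

Fixpoint poch (b : R) (k : nat) : R :=
  match k with
  | O => 1
  | S k' => poch b k' * (b + INR k')
  end.

Fixpoint poch_prod (M : nat) (b : nat -> R) (k : nat) : R :=
  match M with
  | O => 1
  | S M' => poch_prod M' b k * poch (b M') k
  end.

(** Hypergeometric weight
    w(k) = (b_1)_k...(b_M)_k / ((c_1)_k...(c_N)_k) * eta^k / k!  (indices shifted to 0..M-1, 0..N-1). *)
Definition hweight (M : nat) (b : nat -> R) (N : nat) (c : nat -> R) (eta : R) (k : nat) : R :=
  poch_prod M b k / poch_prod N c k * eta ^ k / INR (fact k).

Definition moment (w1 w2 : nat -> R) (n m : nat) : R :=
  if Nat.even m
  then Series (fun k => INR k ^ (n + Nat.div2 m) * w1 k)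
  else Series (fun k => INR k ^ (n + Nat.div2 m) * w2 k).

Fixpoint detn (n : nat) (A : nat -> nat -> R) : R :=
  match n with
  | O => 1
  | S n' => sum_f_R0 (fun j => (-1) ^ j * A O j *
              detn n' (fun i l => A (S i) (if Nat.ltb l j then l else S l))) n'
  end.

Definition theta (g : R -> R -> R) (x y : R) : R :=
  x * Derive (fun t => g t y) x + y * Derive (fun t => g x t) y.

Definition partials_exist (g : R -> R -> R) (x y : R) : Prop :=
  ex_derive (fun t => g t y) x /\ ex_derive (fun t => g x t) y.

(* Write [M] for the moment matrix and [Sm M = U] for the Gauss-Borel factorization, [U] upper
   triangular with diagonal [H]. The Euler operator acts on the weights as multiplication by [k],
   so [theta M] is [M] with the row index shifted by one, and [M] is of Hankel type:
   [M (j+1) l = M j (l+2)]. Differentiating [Sm M = U] shows that [(theta Sm) M + Sm (theta M)] is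
   again upper triangular. Since the leading minors of [M] do not vanish, a row vector annihilating
   the first columns of [M] is zero; comparing rows therefore determines [theta Sm]: with
   [f n = Sm (n+1) n] and [g n = Sm (n+2) n] one gets [theta H n = (f (n-1) - f n) H n],
   [theta f n = g n - g (n-1) + (f n - f (n+1)) f n] and, through the Hankel shift,
   [theta g n = - H (n+2) / H n + f n theta f (n+1)]. Applying [theta] once more to the formula for
   [theta f n] and substituting gives the Toda equation. Differentiability of [Sm] and [H] follows
   from Cramer's rule, the moments being power series in [eta1] and [eta2] inside their discs of
   convergence. *)

From Stdlib Require Import Reals Arith Lra Lia.
From Coquelicot Require Import Coquelicot.
From mathcomp Require all_boot all_algebra Rstruct.
Open Scope R_scope.

Lemma sum_f_R0_swap (F : nat -> nat -> R) n m :
  sum_f_R0 (fun j => sum_f_R0 (fun l => F j l) m) n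
  = sum_f_R0 (fun l => sum_f_R0 (fun j => F j l) n) m.
Proof. induction n as [|n IH]; simpl; [reflexivity|]. now rewrite IH, <- plus_sum. Qed.

Lemma sum_f_R0_zero (f : nat -> R) n : (forall j, (j <= n)%nat -> f j = 0) -> sum_f_R0 f n = 0.
Proof.
  intros Hf. induction n as [|n IH]; simpl; [now apply Hf|].
  rewrite IH, Hf by auto. ring.
Qed.

Lemma sum_f_R0_trunc (f : nat -> R) n m : (n <= m)%nat ->
  (forall j, (n < j <= m)%nat -> f j = 0) -> sum_f_R0 f m = sum_f_R0 f n.
Proof.
  intros Hnm Hf. induction m as [|m IH].
  - now replace n with 0%nat by lia.
  - destruct (Nat.eq_dec n (S m)) as [->|Hne]; [reflexivity|].
    simpl. rewrite IH, Hf by (lia || (intros; apply Hf; lia)). ring.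
Qed.

Definition shift_right (v : nat -> R) (j : nat) : R :=
  match j with O => 0 | S j' => v j' end.

Lemma sum_f_R0_shift_right (v a : nat -> R) m :
  sum_f_R0 (fun j => shift_right v j * a j) (S m) = sum_f_R0 (fun j => v j * a (S j)) m.
Proof. rewrite decomp_sum by lia. simpl shift_right. simpl pred. ring. Qed.

Module DetnCramer.
Import all_boot all_algebra Rstruct GRing.Theory.
Local Open Scope ring_scope.

Lemma detn_det n (A : nat -> nat -> R) : detn n A = \det (\matrix_(i, j < n) A i j).
Proof.
elim: n A => [|n IH] A; first by rewrite det_mx00.
rewrite (expand_det_row _ ord0) /= sum_f_R0E big_mkord.
apply: eq_bigr => j _; rewrite IH mxE /cofactor RpowE add0n !RmultE -mulrA mulrCA.
congr (_ * (_ * \det _)); apply/matrixP => i l; rewrite !mxE /= /bump.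
by case: (ltnP l j) => [/ltP/Nat.ltb_lt | /leP/Nat.ltb_ge] ->.
Qed.

Lemma det_replace_row_mul n (A : 'M[R]_n) (v : 'rV[R]_n) j :
  \det A * v 0 j = \det (\matrix_(k, l) if k == j then (v *m A) 0 l else A k l).
Proof.
rewrite [RHS](expand_det_row _ j).
have -> : \det A * v 0 j = (v *m A *m \adj A) 0 j.
  by rewrite -mulmxA mul_mx_adj mul_mx_scalar mxE mulrC.
rewrite mxE; apply: eq_bigr => l _; rewrite !mxE eqxx; congr (_ * _).
rewrite /cofactor; congr (_ * \det _); apply/matrixP => k k'.
by rewrite !mxE eq_sym (negbTE (neq_lift j k)).
Qed.

Lemma detn_cramer m (A : nat -> nat -> R) (v b : nat -> R) j : (j <= m)%coq_nat ->
  (forall l, (l <= m)%coq_nat -> sum_f_R0 (fun k => Rmult (v k) (A k l)) m = b l) ->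
  Rmult (v j) (detn m.+1 A) = detn m.+1 (fun k l => if Nat.eqb k j then b l else A k l).
Proof.
move=> /leP jm vAb; rewrite !detn_det RmultE mulrC.
pose vr := \row_(k < m.+1) v k.
pose jj : 'I_m.+1 := Ordinal (jm : (j < m.+1)%N).
have -> : v j = vr 0 jj by rewrite mxE.
rewrite det_replace_row_mul; congr (\det _); apply/matrixP => k l; rewrite !mxE.
case: (Nat.eqb_spec k j) => [kj | /eqP kj].
- have -> : k = jj by apply/val_inj.
  rewrite eqxx -vAb; last by apply/leP; rewrite -ltnS.
  by rewrite sum_f_R0E big_mkord; apply: eq_bigr => i _; rewrite !mxE.
- case: eqP => [kjj | _] //.
  by move: kj; rewrite kjj eqxx.
Qed.

End DetnCramer.

Lemma detn_left_kernel m (A : nat -> nat -> R) (v : nat -> R) : detn (S m) A <> 0 ->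
  (forall l, (l <= m)%nat -> sum_f_R0 (fun k => v k * A k l) m = 0) ->
  forall j, (j <= m)%nat -> v j = 0.
Proof.
  (* Cramer's rule for [v] and for the zero vector give the same right-hand side. *)
  intros HA Hv j Hj.
  assert (E0 : 0 * detn (S m) A = detn (S m) (fun k l => if Nat.eqb k j then 0 else A k l)).
  { apply (DetnCramer.detn_cramer m A (fun _ => 0) (fun _ => 0) j Hj). intros l _.
    apply sum_f_R0_zero. intros k _. apply Rmult_0_l. }
  assert (E := DetnCramer.detn_cramer m A v (fun _ => 0) j Hj Hv). cbv beta in E.
  rewrite <- E0, Rmult_0_l in E.
  destruct (Rmult_integral _ _ E); [assumption | contradiction].
Qed.

Lemma locally_Rabs_lt (c r e : R) : Rabs (e - c) < r -> locally e (fun t => Rabs (t - c) < r).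
Proof.
  intros He. assert (Hd : 0 < r - Rabs (e - c)) by lra.
  exists (mkposreal _ Hd). intros t Ht.
  change (Rabs (t - e) < r - Rabs (e - c)) in Ht.
  replace (t - c) with ((t - e) + (e - c)) by ring.
  eapply Rle_lt_trans; [apply Rabs_triang|]. lra.
Qed.

Section Box.
Variables x y eps : R.

Definition in_box (e1 e2 : R) : Prop := Rabs (e1 - x) < eps /\ Rabs (e2 - y) < eps.

Definition partials_on (g : R -> R -> R) : Prop :=
  forall e1 e2, in_box e1 e2 -> partials_exist g e1 e2.

Lemma in_box_center : 0 < eps -> in_box x y.
Proof. intros He. split; now rewrite Rminus_diag, Rabs_R0. Qed.

Lemma in_box_locally_l a b : in_box a b -> locally a (fun t => in_box t b).
Proof.
  intros [Ha Hb]. eapply filter_imp; [|exact (locally_Rabs_lt _ _ _ Ha)].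
  now intros t Ht; split.
Qed.

Lemma in_box_locally_r a b : in_box a b -> locally b (fun t => in_box a t).
Proof.
  intros [Ha Hb]. eapply filter_imp; [|exact (locally_Rabs_lt _ _ _ Hb)].
  now intros t Ht; split.
Qed.

Section Extensionality.
Variables (g h : R -> R -> R).
Hypothesis g_eq_h : forall a b, in_box a b -> g a b = h a b.

Lemma box_eq_locally_l a b : in_box a b -> locally a (fun t => g t b = h t b).
Proof.
  intros Hab. eapply filter_imp; [|exact (in_box_locally_l a b Hab)]. intros t. apply g_eq_h.
Qed.

Lemma box_eq_locally_r a b : in_box a b -> locally b (fun t => g a t = h a t).
Proof.
  intros Hab. eapply filter_imp; [|exact (in_box_locally_r a b Hab)]. intros t. apply g_eq_h.
Qed.

Lemma partials_on_ext : partials_on g -> partials_on h.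
Proof.
  intros Hg a b Hab. destruct (Hg a b Hab) as [Ga Gb]. split.
  - exact (ex_derive_ext_loc _ _ a (box_eq_locally_l a b Hab) Ga).
  - exact (ex_derive_ext_loc _ _ b (box_eq_locally_r a b Hab) Gb).
Qed.

Lemma theta_ext a b : in_box a b -> theta g a b = theta h a b.
Proof.
  intros Hab. unfold theta.
  assert (Ea : Derive (fun t => g t b) a = Derive (fun t => h t b) a)
    by exact (Derive_ext_loc _ _ a (box_eq_locally_l a b Hab)).
  assert (Eb : Derive (fun t => g a t) b = Derive (fun t => h a t) b)
    by exact (Derive_ext_loc _ _ b (box_eq_locally_r a b Hab)).
  now rewrite Ea, Eb.
Qed.

End Extensionality.

Lemma partials_on_const (k : R) : partials_on (fun _ _ => k).
Proof. intros a b _. split; apply ex_derive_const. Qed.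

Lemma theta_const (k a b : R) : theta (fun _ _ => k) a b = 0.
Proof. unfold theta. rewrite !Derive_const. ring. Qed.

Section Rules.
Variables (g h : R -> R -> R).
Hypotheses (Pg : partials_on g) (Ph : partials_on h).

Lemma partials_on_plus : partials_on (fun a b => g a b + h a b).
Proof.
  intros a b Hab. destruct (Pg a b Hab), (Ph a b Hab). split.
  - now apply (ex_derive_plus (fun t => g t b) (fun t => h t b)).
  - now apply (ex_derive_plus (fun t => g a t) (fun t => h a t)).
Qed.

Lemma partials_on_minus : partials_on (fun a b => g a b - h a b).
Proof.
  intros a b Hab. destruct (Pg a b Hab), (Ph a b Hab). split.
  - now apply (ex_derive_minus (fun t => g t b) (fun t => h t b)).
  - now apply (ex_derive_minus (fun t => g a t) (fun t => h a t)).
Qed.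

Lemma partials_on_mult : partials_on (fun a b => g a b * h a b).
Proof.
  intros a b Hab. destruct (Pg a b Hab), (Ph a b Hab). split.
  - now apply (ex_derive_mult (fun t => g t b) (fun t => h t b)).
  - now apply (ex_derive_mult (fun t => g a t) (fun t => h a t)).
Qed.

Lemma partials_on_div : (forall a b, in_box a b -> h a b <> 0) ->
  partials_on (fun a b => g a b / h a b).
Proof.
  intros Hh a b Hab. destruct (Pg a b Hab), (Ph a b Hab). split.
  - now apply (ex_derive_div (fun t => g t b) (fun t => h t b)), Hh.
  - now apply (ex_derive_div (fun t => g a t) (fun t => h a t)), Hh.
Qed.

Lemma theta_plus a b : in_box a b ->
  theta (fun a b => g a b + h a b) a b = theta g a b + theta h a b.
Proof.
  intros Hab. destruct (Pg a b Hab), (Ph a b Hab). unfold theta.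
  rewrite (Derive_plus (fun t => g t b) (fun t => h t b)),
    (Derive_plus (fun t => g a t) (fun t => h a t)) by assumption.
  simpl; ring.
Qed.

Lemma theta_minus a b : in_box a b ->
  theta (fun a b => g a b - h a b) a b = theta g a b - theta h a b.
Proof.
  intros Hab. destruct (Pg a b Hab), (Ph a b Hab). unfold theta.
  rewrite (Derive_minus (fun t => g t b) (fun t => h t b)),
    (Derive_minus (fun t => g a t) (fun t => h a t)) by assumption.
  simpl; ring.
Qed.

Lemma theta_mult a b : in_box a b ->
  theta (fun a b => g a b * h a b) a b = theta g a b * h a b + g a b * theta h a b.
Proof.
  intros Hab. destruct (Pg a b Hab), (Ph a b Hab). unfold theta.
  rewrite (Derive_mult (fun t => g t b) (fun t => h t b)),
    (Derive_mult (fun t => g a t) (fun t => h a t)) by assumption.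
  ring.
Qed.

End Rules.

Section Combination.
Variables (g1 g2 f1 f2 : R -> R -> R).
Hypotheses (P1 : partials_on g1) (P2 : partials_on g2) (P3 : partials_on f1) (P4 : partials_on f2).

Lemma partials_on_combination :
  partials_on (fun a b => g1 a b - g2 a b + (f1 a b - f2 a b) * f1 a b).
Proof.
  apply partials_on_plus;
    [apply partials_on_minus | apply partials_on_mult; [apply partials_on_minus|]]; assumption.
Qed.

Lemma theta_combination a b : in_box a b ->
  theta (fun a b => g1 a b - g2 a b + (f1 a b - f2 a b) * f1 a b) a b
  = theta g1 a b - theta g2 a b
    + ((theta f1 a b - theta f2 a b) * f1 a b + (f1 a b - f2 a b) * theta f1 a b).
Proof.
  intros Hab.
  assert (Q1 : partials_on (fun a b => g1 a b - g2 a b)) by now apply partials_on_minus.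
  assert (Q2 : partials_on (fun a b => f1 a b - f2 a b)) by now apply partials_on_minus.
  rewrite (theta_plus _ _ Q1 (partials_on_mult _ _ Q2 P3) a b Hab),
    (theta_minus g1 g2 P1 P2 a b Hab), (theta_mult _ f1 Q2 P3 a b Hab),
    (theta_minus f1 f2 P3 P4 a b Hab).
  reflexivity.
Qed.

End Combination.

Lemma partials_on_sum (F : nat -> R -> R -> R) n : (forall j, partials_on (F j)) ->
  partials_on (fun a b => sum_f_R0 (fun j => F j a b) n).
Proof.
  intros HF. induction n as [|n IH]; simpl; [apply HF|]. now apply partials_on_plus.
Qed.

Lemma theta_sum (F : nat -> R -> R -> R) n a b : in_box a b -> (forall j, partials_on (F j)) ->
  theta (fun a b => sum_f_R0 (fun j => F j a b) n) a b = sum_f_R0 (fun j => theta (F j) a b) n.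
Proof.
  intros Hab HF. induction n as [|n IH]; simpl; [reflexivity|].
  rewrite (theta_plus (fun a b => sum_f_R0 (fun j => F j a b) n) (F (S n))); auto.
  - now rewrite IH.
  - now apply partials_on_sum.
Qed.

Lemma partials_on_detn n (A : nat -> nat -> R -> R -> R) : (forall k l, partials_on (A k l)) ->
  partials_on (fun a b => detn n (fun k l => A k l a b)).
Proof.
  revert A. induction n as [|n IH]; intros A HA; simpl.
  - apply partials_on_const.
  - apply (partials_on_sum (fun j a b => (-1) ^ j * A O j a b *
      detn n (fun k l => A (S k) (if Nat.ltb l j then l else S l) a b))).
    intros j. apply partials_on_mult; [apply partials_on_mult|].
    + apply partials_on_const.
    + apply HA.
    + apply (IH (fun k l => A (S k) (if Nat.ltb l j then l else S l))). intros; apply HA.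
Qed.

End Box.

Lemma Rabs_lt_CV_radius (a : nat -> R) (c r e : R) :
  (forall t, Rabs (t - c) < r -> ex_series (fun k => a k * t ^ k)) ->
  Rabs (e - c) < r -> Rbar_lt (Rabs e) (CV_radius a).
Proof.
  intros Ha He.
  (* a point of the interval farther from 0 than [e], where the series still converges *)
  set (t := if Rle_dec 0 e then (e + c + r) / 2 else (e + c - r) / 2).
  assert (Ht : Rabs (t - c) < r /\ Rabs e < Rabs t).
  { apply Rabs_def2 in He. unfold t.
    destruct (Rle_dec 0 e); split; try (apply Rabs_def1; lra).
    - rewrite !Rabs_right; lra.
    - rewrite !Rabs_left; lra. }
  destruct Ht as [Htc Het].
  apply (Rbar_lt_le_trans _ (Rabs t)); [exact Het|].
  apply Rbar_not_lt_le. intros Hout.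
  exact (CV_disk_outside a t Hout (ex_series_lim_0 _ (Ha t Htc))).
Qed.

(* [PS_incr_1 (PS_derive a)] is exactly the coefficient sequence [k a_k]. *)
Lemma Euler_PSeries (a : nat -> R) (e : R) : Rbar_lt (Rabs e) (CV_radius a) ->
  e * Derive (PSeries a) e = PSeries (fun k => INR k * a k) e.
Proof.
  intros Ha. rewrite Derive_PSeries, <- PSeries_incr_1 by exact Ha.
  apply PSeries_ext. intros [|k]; [exact (eq_sym (Rmult_0_l (a O))) | reflexivity].
Qed.

Definition hcoef (M : nat) (b : nat -> R) (N : nat) (c : nat -> R) (k : nat) : R :=
  poch_prod M b k / poch_prod N c k / INR (fact k).

Definition hmom (M : nat) (b : nat -> R) (N : nat) (c : nat -> R) (p : nat) (e : R) : R :=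
  Series (fun k => INR k ^ p * hweight M b N c e k).

Section HypergeometricMoments.
Variables (M : nat) (b : nat -> R) (N : nat) (c : nat -> R) (x eps : R).
Hypothesis moments_converge : forall e, Rabs (e - x) < eps ->
  forall p, ex_series (fun k => INR k ^ p * hweight M b N c e k).

Lemma hweight_hcoef p e k :
  INR k ^ p * hweight M b N c e k = INR k ^ p * hcoef M b N c k * e ^ k.
Proof. unfold hweight, hcoef, Rdiv. ring. Qed.

Lemma hmom_PSeries p e : hmom M b N c p e = PSeries (fun k => INR k ^ p * hcoef M b N c k) e.
Proof.
  apply Series_ext. intros k.
  now rewrite hweight_hcoef, (Rmult_comm _ (e ^ k)), <- (pow_n_pow e k).
Qed.

Lemma hmom_radius p e : Rabs (e - x) < eps ->
  Rbar_lt (Rabs e) (CV_radius (fun k => INR k ^ p * hcoef M b N c k)).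
Proof.
  apply Rabs_lt_CV_radius. intros t Ht.
  eapply ex_series_ext; [|exact (moments_converge t Ht p)].
  intros k. apply hweight_hcoef.
Qed.

Lemma ex_derive_hmom p e : Rabs (e - x) < eps -> ex_derive (hmom M b N c p) e.
Proof.
  intros He. apply (ex_derive_ext (PSeries (fun k => INR k ^ p * hcoef M b N c k))).
  - intros t. symmetry. apply hmom_PSeries.
  - now apply ex_derive_PSeries, hmom_radius.
Qed.

Lemma Euler_hmom p e : Rabs (e - x) < eps ->
  e * Derive (hmom M b N c p) e = hmom M b N c (S p) e.
Proof.
  intros He.
  rewrite (Derive_ext _ (PSeries (fun k => INR k ^ p * hcoef M b N c k))) by apply hmom_PSeries.
  rewrite Euler_PSeries, hmom_PSeries by now apply hmom_radius.
  apply PSeries_ext. intros k. simpl. ring.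
Qed.

End HypergeometricMoments.

Definition hmoment (M1 : nat) (b1 : nat -> R) (M2 : nat) (b2 : nat -> R) (N : nat) (c : nat -> R)
  (j l : nat) (e1 e2 : R) : R :=
  moment (hweight M1 b1 N c e1) (hweight M2 b2 N c e2) j l.

Lemma hmoment_shift M1 b1 M2 b2 N c j l e1 e2 :
  hmoment M1 b1 M2 b2 N c (S j) l e1 e2 = hmoment M1 b1 M2 b2 N c j (S (S l)) e1 e2.
Proof.
  unfold hmoment, moment. simpl Nat.even. simpl Nat.div2.
  now replace (S j + Nat.div2 l)%nat with (j + S (Nat.div2 l))%nat by lia.
Qed.

Section MomentMatrix.
Variables (M1 : nat) (b1 : nat -> R) (M2 : nat) (b2 : nat -> R) (N : nat) (c : nat -> R).
Variables x y eps : R.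
Hypothesis moments1_converge : forall e, Rabs (e - x) < eps ->
  forall p, ex_series (fun k => INR k ^ p * hweight M1 b1 N c e k).
Hypothesis moments2_converge : forall e, Rabs (e - y) < eps ->
  forall p, ex_series (fun k => INR k ^ p * hweight M2 b2 N c e k).

(* Even columns of the moment matrix depend on [eta1] only, odd columns on [eta2] only. *)
Lemma partials_on_hmoment j l : partials_on x y eps (hmoment M1 b1 M2 b2 N c j l).
Proof.
  intros a b [Ha Hb]. unfold partials_exist, hmoment, moment.
  destruct (Nat.even l); split.
  - now apply (ex_derive_hmom M1 b1 N c x eps).
  - apply ex_derive_const.
  - apply ex_derive_const.
  - now apply (ex_derive_hmom M2 b2 N c y eps).
Qed.

Lemma theta_hmoment j l a b : in_box x y eps a b ->
  theta (hmoment M1 b1 M2 b2 N c j l) a b = hmoment M1 b1 M2 b2 N c (S j) l a b.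
Proof.
  intros [Ha Hb]. unfold theta, hmoment, moment.
  destruct (Nat.even l); rewrite Derive_const.
  - rewrite Rmult_0_r, Rplus_0_r. exact (Euler_hmom M1 b1 N c x eps moments1_converge _ a Ha).
  - rewrite Rmult_0_r, Rplus_0_l. exact (Euler_hmom M2 b2 N c y eps moments2_converge _ b Hb).
Qed.

End MomentMatrix.

Lemma left_product_upper_triangular (L T M : nat -> nat -> R) (H : nat -> R) :
  (forall i, T i i = 1) ->
  (forall i m, sum_f_R0 (fun j => sum_f_R0 (fun l => L i j * M j l * T m l) m) i
               = if Nat.eqb i m then H i else 0) ->
  forall i l, (l <= i)%nat ->
    sum_f_R0 (fun j => L i j * M j l) i = if Nat.eqb l i then H i else 0.
Proof.
  intros T_diag LMT i l. rewrite Nat.eqb_sym.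
  induction l as [l IH] using lt_wf_ind. intros Hli.
  assert (E := LMT i l). rewrite sum_f_R0_swap in E.
  destruct l as [|l]; simpl in E.
  - rewrite <- E. apply sum_eq. intros j _. now rewrite T_diag, Rmult_1_r.
  - rewrite sum_f_R0_zero, Rplus_0_l in E.
    + rewrite <- E. apply sum_eq. intros j _. now rewrite T_diag, Rmult_1_r.
    + intros l' Hl'. rewrite <- scal_sum, IH by lia.
      replace (Nat.eqb i l') with false by (symmetry; apply Nat.eqb_neq; lia). ring.
Qed.

Section GaussBorel.
Variables (M Sm : nat -> nat -> R) (H : nat -> R).
Hypothesis M_minors : forall p, detn p M <> 0.
Hypothesis Sm_diag : forall i, Sm i i = 1.
Hypothesis Sm_above_diag : forall i j, (i < j)%nat -> Sm i j = 0.
Hypothesis SmM : forall i l, (l <= i)%nat ->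
  sum_f_R0 (fun j => Sm i j * M j l) i = if Nat.eqb l i then H i else 0.

Lemma H_neq0 i : H i <> 0.
Proof.
  intros H0. assert (Sm i i = 0); [|rewrite Sm_diag in *; lra].
  apply (detn_left_kernel i M (Sm i)); [apply M_minors| |lia].
  intros l Hl. rewrite SmM by exact Hl. now destruct (Nat.eqb l i).
Qed.

Lemma SmM_extend i l n : (i <= n)%nat -> (l <= i)%nat ->
  sum_f_R0 (fun j => Sm i j * M j l) n = if Nat.eqb l i then H i else 0.
Proof.
  intros Hin Hli. rewrite <- SmM by exact Hli. apply sum_f_R0_trunc; [exact Hin|].
  intros j Hj. rewrite Sm_above_diag by lia. ring.
Qed.

Lemma SmM_below_diag m l : (l <= m)%nat ->
  sum_f_R0 (fun j => Sm (S m) j * M j l) m = - M (S m) l.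
Proof.
  intros Hl. assert (E := SmM (S m) l ltac:(lia)). simpl in E.
  rewrite Sm_diag, (proj2 (Nat.eqb_neq l (S m))) in E by lia. lra.
Qed.

Section Derivative.
Variables (dSm : nat -> nat -> R) (dH : nat -> R).
Hypothesis dSm_upper_zero : forall i j, (i <= j)%nat -> dSm i j = 0.
Hypothesis dSmM : forall i l, (l <= i)%nat ->
  sum_f_R0 (fun j => dSm i j * M j l + Sm i j * M (S j) l) i = if Nat.eqb l i then dH i else 0.

Section Row.
Variable m : nat.
Let i := S m.
Let alpha := Sm i m - Sm (S i) i.
(* The defect of the claimed formula for row [i] of [dSm]; [z M] vanishes on the first [i]
   columns. *)
Let z j := dSm i j + shift_right (Sm i) j - Sm (S i) j - alpha * Sm i j.

Lemma z_times_M l : (l <= i)%nat ->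
  sum_f_R0 (fun j => z j * M j l) i = if Nat.eqb l i then dH i - alpha * H i else 0.
Proof.
  intros Hl.
  assert (E : sum_f_R0 (fun j => z j * M j l) i =
      sum_f_R0 (fun j => dSm i j * M j l + Sm i j * M (S j) l) i
    - sum_f_R0 (fun j => Sm i j * M (S j) l) i
    + sum_f_R0 (fun j => shift_right (Sm i) j * M j l) i
    - sum_f_R0 (fun j => Sm (S i) j * M j l) i
    - alpha * sum_f_R0 (fun j => Sm i j * M j l) i).
  { rewrite scal_sum, <- !minus_sum, <- plus_sum, <- !minus_sum.
    apply sum_eq. intros j _. unfold z. ring. }
  rewrite E, dSmM, SmM, SmM_below_diag by (unfold i; lia).
  unfold i. rewrite sum_f_R0_shift_right, tech5.
  rewrite Sm_diag. destruct (Nat.eqb l (S m)); ring.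
Qed.

Lemma z_zero j : (j <= i)%nat -> z j = 0.
Proof.
  assert (Zi : z i = 0).
  { unfold z, alpha, i. rewrite dSm_upper_zero, Sm_diag by lia. simpl. ring. }
  intros Hj. destruct (Nat.eq_dec j i) as [->|Hne]; [exact Zi|].
  apply (detn_left_kernel m M z); [apply M_minors| |unfold i in *; lia].
  intros l Hl. assert (E := z_times_M l ltac:(unfold i; lia)).
  unfold i in E. simpl in E. fold i in E.
  rewrite Zi, (proj2 (Nat.eqb_neq l i)) in E by (unfold i; lia). lra.
Qed.

Lemma dSm_row j : (j <= m)%nat ->
  dSm (S m) j + shift_right (Sm (S m)) j
  = Sm (S (S m)) j + (Sm (S m) m - Sm (S (S m)) (S m)) * Sm (S m) j.
Proof.
  intros Hj. assert (E : z j = 0) by (apply z_zero; unfold i; lia).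
  unfold z, alpha, i in E. lra.
Qed.

Lemma dH_diag : dH (S m) = (Sm (S m) m - Sm (S (S m)) (S m)) * H (S m).
Proof.
  assert (E := z_times_M i (le_n i)). rewrite Nat.eqb_refl, sum_f_R0_zero in E.
  - unfold alpha, i in E. lra.
  - intros j Hj. rewrite z_zero by exact Hj. ring.
Qed.

End Row.

Hypothesis M_shift : forall j l, M (S j) l = M j (S (S l)).

(* [M_shift] turns [Sm M'] into [Sm M] read two columns further right; this produces
   [H (S (S m))]. *)
Lemma dSm_second_subdiag m :
  dSm (S (S m)) m = - H (S (S m)) / H m + dSm (S (S m)) (S m) * Sm (S m) m.
Proof.
  set (i := S (S m)). set (a := H i / H m). set (b := dSm i (S m)).
  set (v := fun j => dSm i j + a * Sm m j - b * Sm (S m) j).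
  assert (Hv : forall l, (l <= m)%nat -> sum_f_R0 (fun j => v j * M j l) i = 0).
  { intros l Hl.
    assert (E : sum_f_R0 (fun j => v j * M j l) i =
        sum_f_R0 (fun j => dSm i j * M j l + Sm i j * M (S j) l) i
      - sum_f_R0 (fun j => Sm i j * M j (S (S l))) i
      + a * sum_f_R0 (fun j => Sm m j * M j l) i
      - b * sum_f_R0 (fun j => Sm (S m) j * M j l) i).
    { rewrite !scal_sum, <- !minus_sum, <- plus_sum, <- !minus_sum.
      apply sum_eq. intros j _. unfold v. rewrite M_shift. ring. }
    rewrite E, dSmM, SmM, !SmM_extend by (unfold i; lia).
    rewrite (proj2 (Nat.eqb_neq l i)), (proj2 (Nat.eqb_neq l (S m))) by (unfold i; lia).
    unfold i. destruct (Nat.eq_dec l m) as [->|Hne].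
    - rewrite !Nat.eqb_refl. unfold a, i. field. apply H_neq0.
    - rewrite (proj2 (Nat.eqb_neq l m)), (proj2 (Nat.eqb_neq (S (S l)) (S (S m)))) by lia. ring. }
  assert (Vm : v m = 0).
  { apply (detn_left_kernel m M v); [apply M_minors| |lia].
    intros l Hl. rewrite <- (Hv l Hl). symmetry. apply sum_f_R0_trunc; [unfold i; lia|].
    intros j Hj. unfold v, b, i.
    destruct (Nat.eq_dec j (S m)) as [->|Hne].
    - rewrite Sm_diag, Sm_above_diag by lia. ring.
    - replace j with (S (S m)) by lia. rewrite dSm_upper_zero, !Sm_above_diag by lia. ring. }
  unfold v, a in Vm. rewrite Sm_diag in Vm. fold i b. lra.
Qed.

End Derivative.
End GaussBorel.

Section Toda.
Variables x y eps : R.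
Local Notation in_box := (in_box x y eps).
Local Notation partials_on := (partials_on x y eps).

Variable Mom : nat -> nat -> R -> R -> R.
Variables (Sm : R -> R -> nat -> nat -> R) (H : R -> R -> nat -> R).
Hypothesis Mom_partials : forall j l, partials_on (Mom j l).
Hypothesis theta_Mom : forall j l a b, in_box a b -> theta (Mom j l) a b = Mom (S j) l a b.
Hypothesis Mom_shift : forall j l a b, Mom (S j) l a b = Mom j (S (S l)) a b.
Hypothesis Mom_minors : forall a b, in_box a b -> forall p, detn p (fun j l => Mom j l a b) <> 0.
Hypothesis Sm_diag : forall a b, in_box a b -> forall i, Sm a b i i = 1.
Hypothesis Sm_above_diag : forall a b, in_box a b -> forall i j, (i < j)%nat -> Sm a b i j = 0.
Hypothesis SmMom : forall a b, in_box a b -> forall i l, (l <= i)%nat ->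
  sum_f_R0 (fun j => Sm a b i j * Mom j l a b) i = if Nat.eqb l i then H a b i else 0.

Lemma Sm_upper_const a b i j : in_box a b -> (i <= j)%nat ->
  Sm a b i j = if Nat.eqb i j then 1 else 0.
Proof.
  intros Hab Hij. destruct (Nat.eqb_spec i j) as [->|Hne].
  - now apply Sm_diag.
  - apply Sm_above_diag; [exact Hab | lia].
Qed.

(* Below the diagonal, Cramer's rule expresses [Sm] through minors of the moment matrix. *)
Lemma Sm_partials i j : partials_on (fun a b => Sm a b i j).
Proof.
  destruct (le_lt_dec i j) as [Hij|Hij].
  - apply (partials_on_ext _ _ _ (fun _ _ => if Nat.eqb i j then 1 else 0)).
    + intros a b Hab. symmetry. now apply Sm_upper_const.
    + apply partials_on_const.
  - destruct i as [|m]; [lia|].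
    set (Mj := fun k l a b => if Nat.eqb k j then 0 - Mom (S m) l a b else Mom k l a b).
    apply (partials_on_ext _ _ _
      (fun a b => detn (S m) (fun k l => Mj k l a b) / detn (S m) (fun k l => Mom k l a b))).
    + intros a b Hab.
      assert (E : Sm a b (S m) j * detn (S m) (fun k l => Mom k l a b)
                  = detn (S m) (fun k l => Mj k l a b)).
      { apply (DetnCramer.detn_cramer m _ (Sm a b (S m)) (fun l => 0 - Mom (S m) l a b) j).
        - lia.
        - intros l Hl. rewrite (SmM_below_diag _ _ (H a b) (Sm_diag a b Hab) (SmMom a b Hab))
            by exact Hl. ring. }
      rewrite <- E. field. now apply Mom_minors.
    + apply partials_on_div.
      * apply partials_on_detn. intros k l. unfold Mj. destruct (Nat.eqb k j).
        -- apply partials_on_minus; [apply partials_on_const | apply Mom_partials].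
        -- apply Mom_partials.
      * now apply partials_on_detn.
      * intros a b Hab. now apply Mom_minors.
Qed.

Lemma H_partials i : partials_on (fun a b => H a b i).
Proof.
  apply (partials_on_ext _ _ _ (fun a b => sum_f_R0 (fun j => Sm a b i j * Mom j i a b) i)).
  - intros a b Hab. rewrite SmMom by (exact Hab || lia). now rewrite Nat.eqb_refl.
  - apply (partials_on_sum _ _ _ (fun j a b => Sm a b i j * Mom j i a b)). intros j.
    apply partials_on_mult; [apply Sm_partials | apply Mom_partials].
Qed.

Lemma theta_Sm_upper_zero a b : in_box a b ->
  forall i j, (i <= j)%nat -> theta (fun a b => Sm a b i j) a b = 0.
Proof.
  intros Hab i j Hij.
  rewrite (theta_ext x y eps _ (fun _ _ => if Nat.eqb i j then 1 else 0)).
  - apply theta_const.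
  - intros a' b' Hab'. now apply Sm_upper_const.
  - exact Hab.
Qed.

Lemma theta_SmMom a b : in_box a b -> forall i l, (l <= i)%nat ->
  sum_f_R0 (fun j => theta (fun a b => Sm a b i j) a b * Mom j l a b
                    + Sm a b i j * Mom (S j) l a b) i
  = if Nat.eqb l i then theta (fun a b => H a b i) a b else 0.
Proof.
  intros Hab i l Hli.
  assert (Pj : forall j, partials_on (fun a b => Sm a b i j * Mom j l a b)).
  { intros j. apply partials_on_mult; [apply Sm_partials | apply Mom_partials]. }
  transitivity (theta (fun a b => sum_f_R0 (fun j => Sm a b i j * Mom j l a b) i) a b).
  - rewrite (theta_sum _ _ _ (fun j a b => Sm a b i j * Mom j l a b) i a b Hab Pj).
    apply sum_eq. intros j _.
    rewrite (theta_mult x y eps);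
      [now rewrite theta_Mom | apply Sm_partials | apply Mom_partials | exact Hab].
  - rewrite (theta_ext x y eps _ (fun a b => if Nat.eqb l i then H a b i else 0)).
    + destruct (Nat.eqb l i); [reflexivity | apply theta_const].
    + intros a' b' Hab'. now apply SmMom.
    + exact Hab.
Qed.

Let dSm a b i j := theta (fun a b => Sm a b i j) a b.
Let dH a b i := theta (fun a b => H a b i) a b.

Lemma H_neq0_on a b : in_box a b -> forall i, H a b i <> 0.
Proof. intros Hab. exact (H_neq0 _ _ _ (Mom_minors a b Hab) (Sm_diag a b Hab) (SmMom a b Hab)). Qed.

Lemma theta_log_H a b m : in_box a b ->
  theta (fun a b => H a b (S m)) a b / H a b (S m) = Sm a b (S m) m - Sm a b (S (S m)) (S m).
Proof.
  intros Hab.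
  change (dH a b (S m) / H a b (S m) = Sm a b (S m) m - Sm a b (S (S m)) (S m)).
  rewrite (dH_diag (fun j l => Mom j l a b) (Sm a b) (H a b) (Mom_minors a b Hab)
    (Sm_diag a b Hab) (SmMom a b Hab) (dSm a b) (dH a b) (theta_Sm_upper_zero a b Hab)
    (theta_SmMom a b Hab)).
  field. now apply H_neq0_on.
Qed.

Lemma theta_subdiag a b m : in_box a b ->
  theta (fun a b => Sm a b (S (S m)) (S m)) a b
  = Sm a b (S (S (S m))) (S m) - Sm a b (S (S m)) m
    + (Sm a b (S (S m)) (S m) - Sm a b (S (S (S m))) (S (S m))) * Sm a b (S (S m)) (S m).
Proof.
  intros Hab.
  assert (E := dSm_row (fun j l => Mom j l a b) (Sm a b) (H a b) (Mom_minors a b Hab)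
    (Sm_diag a b Hab) (SmMom a b Hab) (dSm a b) (dH a b) (theta_Sm_upper_zero a b Hab)
    (theta_SmMom a b Hab)
    (S m) (S m) (le_n _)).
  cbn [shift_right] in E. unfold dSm in E. lra.
Qed.

Lemma theta_second_subdiag a b m : in_box a b ->
  theta (fun a b => Sm a b (S (S m)) m) a b
  = - H a b (S (S m)) / H a b m + theta (fun a b => Sm a b (S (S m)) (S m)) a b * Sm a b (S m) m.
Proof.
  intros Hab.
  exact (dSm_second_subdiag (fun j l => Mom j l a b) (Sm a b) (H a b) (Mom_minors a b Hab)
    (Sm_diag a b Hab) (Sm_above_diag a b Hab) (SmMom a b Hab) (dSm a b) (dH a b)
    (theta_Sm_upper_zero a b Hab) (theta_SmMom a b Hab) (fun j l => Mom_shift j l a b) m).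
Qed.

Lemma theta_subdiag_partials m : partials_on (theta (fun a b => Sm a b (S (S m)) (S m))).
Proof.
  apply (partials_on_ext _ _ _ (fun a b => Sm a b (S (S (S m))) (S m) - Sm a b (S (S m)) m
    + (Sm a b (S (S m)) (S m) - Sm a b (S (S (S m))) (S (S m))) * Sm a b (S (S m)) (S m))).
  - intros a b Hab. symmetry. now apply theta_subdiag.
  - apply partials_on_combination; apply Sm_partials.
Qed.

Lemma toda_equation a b m : in_box a b ->
  theta (theta (fun a b => Sm a b (S (S m)) (S m))) a b
  - (2 * Sm a b (S (S m)) (S m) - Sm a b (S (S (S m))) (S (S m)) - Sm a b (S m) m)
    * theta (fun a b => Sm a b (S (S m)) (S m)) a b
  = H a b (S (S m)) / H a b m - H a b (S (S (S m))) / H a b (S m).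
Proof.
  intros Hab.
  rewrite (theta_ext x y eps _ (fun a b => Sm a b (S (S (S m))) (S m) - Sm a b (S (S m)) m
    + (Sm a b (S (S m)) (S m) - Sm a b (S (S (S m))) (S (S m))) * Sm a b (S (S m)) (S m))).
  2: { intros a' b' Hab'. now apply theta_subdiag. }
  2: exact Hab.
  rewrite (theta_combination x y eps (fun a b => Sm a b (S (S (S m))) (S m))
    (fun a b => Sm a b (S (S m)) m) (fun a b => Sm a b (S (S m)) (S m))
    (fun a b => Sm a b (S (S (S m))) (S (S m))) (Sm_partials _ _) (Sm_partials _ _)
    (Sm_partials _ _) (Sm_partials _ _) a b Hab).
  rewrite (theta_second_subdiag a b (S m)), (theta_second_subdiag a b m) by exact Hab.
  field. split; now apply H_neq0_on.
Qed.

Lemma toda_lattice a b m : in_box a b ->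
  partials_exist (fun a b => H a b (S m)) a b /\
  partials_exist (fun a b => Sm a b (S (S m)) (S m)) a b /\
  partials_exist (theta (fun a b => Sm a b (S (S m)) (S m))) a b /\
  theta (fun a b => H a b (S m)) a b / H a b (S m) = Sm a b (S m) m - Sm a b (S (S m)) (S m) /\
  theta (theta (fun a b => Sm a b (S (S m)) (S m))) a b
  - (2 * Sm a b (S (S m)) (S m) - Sm a b (S (S (S m))) (S (S m)) - Sm a b (S m) m)
    * theta (fun a b => Sm a b (S (S m)) (S m)) a b
  = H a b (S (S m)) / H a b m - H a b (S (S (S m))) / H a b (S m).
Proof.
  intros Hab. split; [|split; [|split; [|split]]].
  - exact (H_partials (S m) a b Hab).
  - exact (Sm_partials _ _ a b Hab).
  - exact (theta_subdiag_partials m a b Hab).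
  - exact (theta_log_H a b m Hab).
  - exact (toda_equation a b m Hab).
Qed.

End Toda.

Theorem mainTheorem12
  (M1 M2 N : nat) (b1 b2 c : nat -> R)
  (Sm Stm : R -> R -> nat -> nat -> R) (H : R -> R -> nat -> R)
  (x y eps : R) :
  (* the c parameters are never 0, -1, -2, ... so the weights are defined *)
  (forall i j, (i < N)%nat -> c i + INR j <> 0) ->
  0 < eps ->
  (* standing assumptions, on a neighbourhood of (x, y) *)
  (forall e1 e2, Rabs (e1 - x) < eps -> Rabs (e2 - y) < eps ->
     (* convergent series *)
     (forall j, ex_series (fun k => INR k ^ j * hweight M1 b1 N c e1 k)) /\
     (forall j, ex_series (fun k => INR k ^ j * hweight M2 b2 N c e2 k)) /\
     (* all leading principal minors nonzero *)
     (forall n, detn n (moment (hweight M1 b1 N c e1) (hweight M2 b2 N c e2)) <> 0) /\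
     (* Gauss-Borel factorization  Sm Mom Stm^T (Sm = S, Stm = S tilde) = diag(H), Sm, Stm lower unitriangular *)
     (forall i, Sm e1 e2 i i = 1 /\ Stm e1 e2 i i = 1) /\
     (forall i j, (i < j)%nat -> Sm e1 e2 i j = 0 /\ Stm e1 e2 i j = 0) /\
     (forall i m,
        sum_f_R0 (fun j => sum_f_R0 (fun l =>
            Sm e1 e2 i j * moment (hweight M1 b1 N c e1) (hweight M2 b2 N c e2) j l
            * Stm e1 e2 m l) m) i
        = if Nat.eqb i m then H e1 e2 i else 0)) ->
  let Hn := fun n => fun e1 e2 => H e1 e2 n in
  let f := fun n => fun e1 e2 => Sm e1 e2 (S n) n in
  forall n : nat, (1 <= n)%nat ->
    partials_exist (Hn n) x y /\ partials_exist (f n) x y /\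
    partials_exist (theta (f n)) x y /\
    (* theta q_n = f_{n-1} - f_n, with q_n = log H_n *)
    theta (Hn n) x y / Hn n x y = f (n - 1)%nat x y - f n x y /\
    (* theta^2 f_n - (2 f_n - f_{n+1} - f_{n-1}) theta f_n = e^{q_{n+1}-q_{n-1}} - e^{q_{n+2}-q_n} *)
    theta (theta (f n)) x y
      - (2 * f n x y - f (S n) x y - f (n - 1)%nat x y) * theta (f n) x y
    = Hn (S n) x y / Hn (n - 1)%nat x y - Hn (S (S n)) x y / Hn n x y.
Proof.
  intros _ Heps HYP Hn f n Hn1. subst Hn f. cbv beta.
  destruct n as [|m]; [lia|]. replace (S m - 1)%nat with m by lia.
  assert (Conv1 : forall e, Rabs (e - x) < eps ->
    forall p, ex_series (fun k => INR k ^ p * hweight M1 b1 N c e k)).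
  { intros e He. refine (proj1 (HYP e y He _)). now rewrite Rminus_diag, Rabs_R0. }
  assert (Conv2 : forall e, Rabs (e - y) < eps ->
    forall p, ex_series (fun k => INR k ^ p * hweight M2 b2 N c e k)).
  { intros e He. refine (proj1 (proj2 (HYP x e _ He))). now rewrite Rminus_diag, Rabs_R0. }
  assert (Pt := fun a b (Hab : in_box x y eps a b) => HYP a b (proj1 Hab) (proj2 Hab)).
  apply (toda_lattice x y eps (hmoment M1 b1 M2 b2 N c) Sm H).
  - now apply partials_on_hmoment.
  - now apply theta_hmoment.
  - apply hmoment_shift.
  - intros a b Hab. apply (Pt a b Hab).
  - intros a b Hab i. apply (Pt a b Hab).
  - intros a b Hab i j Hij. now apply (Pt a b Hab).
  - intros a b Hab. destruct (Pt a b Hab) as (_ & _ & _ & Hdiag & _ & Hfact).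
    apply (left_product_upper_triangular _ (Stm a b)); [intros i; apply Hdiag | exact Hfact].
  - now apply in_box_center.
Qed.
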